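(* Let $a$ be a fixed positive integer. For any positive integers $k,n$ with $k\ge n$, $$S_t(N_{k,n})=\sum_{i=1}^n\binom{k-i}{k-n}t^{n-i}N_{k,i}.$$
   Context: $\mathfrak{h}_t=\mathbb{Q}[t]\langle x,y\rangle$, $z_k=x^{k-1}y$. For $k\ge n\ge1$, $N_{k,n}=\sum_{k_1+\cdots+k_n=k,\ k_i\ge1}z_{ak_1}\cdots z_{ak_n}$. $\sigma_t$ is the algebra automorphism of $\mathfrak{h}_t$ with $\sigma_t(x)=x,\sigma_t(y)=tx+y$, and $S_t$ is the $\mathbb{Q}[t]$-linear map with $S_t(1)=1$, $S_t(wa)=\sigma_t(w)a$ for words $w$ and letters $a\in\{x,y\}$. *)

From HB Require Import structures.
From mathcomp Require Import all_boot all_order all_algebra.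
Set Implicit Arguments. Unset Strict Implicit. Unset Printing Implicit Defensive.
Import GRing.Theory.
Local Open Scope ring_scope.

(* Letters: x is encoded as [false], y as [true]; words are seq bool. *)
Definition lx : bool := false.
Definition ly : bool := true.

(* An element of h_t = Q[t]<x,y> is represented by a finite formal sum
   of terms (coefficient in Q[t], word). *)
Definition ncpoly := seq ({poly rat} * seq bool).

Definition ncoef (p : ncpoly) (w : seq bool) : {poly rat} :=
  \sum_(m <- p | m.2 == w) m.1.

Definition nc_eq (p q : ncpoly) : Prop := forall w, ncoef p w = ncoef q w.

Definition nc_one : ncpoly := [:: (1, [::])].
Definition nc_word (w : seq bool) : ncpoly := [:: (1, w)].
Definition nc_add (p q : ncpoly) : ncpoly := p ++ q.
Definition nc_scale (c : {poly rat}) (p : ncpoly) : ncpoly :=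
  [seq (c * m.1, m.2) | m <- p].
Definition nc_mul (p q : ncpoly) : ncpoly :=
  [seq (m.1 * m'.1, m.2 ++ m'.2) | m <- p, m' <- q].
Definition nc_sum (ps : seq ncpoly) : ncpoly := flatten ps.

(* sigma_t: algebra automorphism with x |-> x, y |-> t x + y *)
Definition sigma_letter (b : bool) : ncpoly :=
  if b then [:: ('X, [:: lx]); (1, [:: ly])] else [:: (1, [:: lx])].
Definition sigma_word (w : seq bool) : ncpoly :=
  foldr (fun b acc => nc_mul (sigma_letter b) acc) nc_one w.
Definition sigma_t (p : ncpoly) : ncpoly :=
  nc_sum [seq nc_scale m.1 (sigma_word m.2) | m <- p].

(* S_t: Q[t]-linear, S_t(1) = 1, S_t(w a) = sigma_t(w) a *)
Definition S_word (w : seq bool) : ncpoly :=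
  match rev w with
  | [::] => nc_one
  | a :: r => nc_mul (sigma_word (rev r)) (nc_word [:: a])
  end.
Definition S_t (p : ncpoly) : ncpoly :=
  nc_sum [seq nc_scale m.1 (S_word m.2) | m <- p].

Definition zw (k : nat) : seq bool := rcons (nseq k.-1 lx) ly.

Fixpoint comps (k n : nat) : seq (seq nat) :=
  match n with
  | 0 => if k == 0%N then [:: [::]] else [::]
  | n'.+1 => flatten [seq [seq i :: c | c <- comps (k - i) n'] | i <- iota 1 k]
  end.

Definition Nkn (a k n : nat) : ncpoly :=
  [seq (1, flatten [seq zw (a * ki) | ki <- c]) | c <- comps k n].

From mathcomp Require Import all_boot all_order all_algebra.
From mathcomp Require Import ring zify.
Set Implicit Arguments. Unset Strict Implicit. Unset Printing Implicit Defensive.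
Import GRing.Theory.
Local Open Scope ring_scope.

(* Splitting on whether the first part k_1 equals 1 gives
   N_{k+1,n+1} = z_a N_{k,n} + x^a N_{k,n+1}.  Since S_t(u P) = sigma_t(u) S_t(P)
   whenever P has no constant term, and sigma_t(z_a) = t x^a + z_a while sigma_t
   fixes x^a, the right-hand sides R_{k,n} = sum_i C(k-i,n-i) t^(n-i) N_{k,i}
   satisfy the same recurrence as S_t(N_{k,n}) by Pascal's rule; induction on k
   concludes, and C(k-i,n-i) = C(k-i,k-n). *)

Lemma ncoef_nil w : ncoef [::] w = 0.
Proof. by rewrite /ncoef big_nil. Qed.

Lemma ncoef_cat p q w : ncoef (p ++ q) w = ncoef p w + ncoef q w.
Proof. by rewrite /ncoef big_cat. Qed.

Lemma ncoefE p w : ncoef p w = \sum_(m <- p) (if m.2 == w then m.1 else 0).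
Proof. by rewrite /ncoef big_mkcond. Qed.

Lemma ncoef_sum ps w : ncoef (nc_sum ps) w = \sum_(p <- ps) ncoef p w.
Proof. by rewrite /ncoef /nc_sum big_flatten. Qed.

Lemma ncoef_scale c p w : ncoef (nc_scale c p) w = c * ncoef p w.
Proof. by rewrite /ncoef /nc_scale big_map mulr_sumr. Qed.

Lemma ncoef_word u w : ncoef (nc_word u) w = (u == w)%:R.
Proof. by rewrite ncoefE big_seq1; case: eqP. Qed.

Lemma big_nc_mul (F : {poly rat} * seq bool -> {poly rat}) p q :
  \sum_(m <- nc_mul p q) F m =
  \sum_(m <- p) \sum_(m' <- q) F (m.1 * m'.1, m.2 ++ m'.2).
Proof. by rewrite big_flatten big_map; apply: eq_bigr => m _; rewrite big_map. Qed.

Lemma ncoef_mul p q w : ncoef (nc_mul p q) w =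
  \sum_(m <- p) \sum_(m' <- q) (if m.2 ++ m'.2 == w then m.1 * m'.1 else 0).
Proof. by rewrite ncoefE big_nc_mul. Qed.

Lemma eqseq_cat_take (T : eqType) (u v w : seq T) :
  (u ++ v == w) = (u == take (size u) w) && (v == drop (size u) w).
Proof.
apply/eqP/andP => [<-|]; first by rewrite take_size_cat // drop_size_cat.
by move: (size u) => i [/eqP-> /eqP->]; rewrite cat_take_drop.
Qed.

Lemma eqseq_cat_drop (T : eqType) (u v w : seq T) :
  (u ++ v == w) =
  (u == take (size w - size v) w) && (v == drop (size w - size v) w).
Proof.
apply/eqP/andP => [<-|].
  by rewrite size_cat addnK take_size_cat // drop_size_cat.
by move: (size w - size v)%N => i [/eqP-> /eqP->]; rewrite cat_take_drop.
Qed.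

Lemma ncoef_mul_prefix p q w : ncoef (nc_mul p q) w =
  \sum_(m <- p) (if m.2 == take (size m.2) w
                 then m.1 * ncoef q (drop (size m.2) w) else 0).
Proof.
rewrite ncoef_mul; apply: eq_bigr => m _; case: ifP => pre_m; last first.
  by apply: big1 => m' _; rewrite eqseq_cat_take pre_m.
rewrite ncoefE mulr_sumr; apply: eq_bigr => m' _.
by rewrite eqseq_cat_take pre_m /=; case: ifP; rewrite ?mulr0.
Qed.

Lemma ncoef_mul_suffix p q w : ncoef (nc_mul p q) w =
  \sum_(m' <- q) (if m'.2 == drop (size w - size m'.2) w
                  then ncoef p (take (size w - size m'.2) w) * m'.1 else 0).
Proof.
rewrite ncoef_mul exchange_big; apply: eq_bigr => m' _.
case: ifP => suf_m'; last by apply: big1 => m _; rewrite eqseq_cat_drop suf_m' andbF.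
rewrite ncoefE mulr_suml; apply: eq_bigr => m _.
by rewrite eqseq_cat_drop suf_m' andbT; case: ifP; rewrite ?mul0r.
Qed.

Lemma nc_eq_mull p p' q : nc_eq p p' -> nc_eq (nc_mul p q) (nc_mul p' q).
Proof.
by move=> pp' w; rewrite !ncoef_mul_suffix; apply: eq_bigr => m' _; rewrite pp'.
Qed.

Lemma nc_eq_mulr p q q' : nc_eq q q' -> nc_eq (nc_mul p q) (nc_mul p q').
Proof.
by move=> qq' w; rewrite !ncoef_mul_prefix; apply: eq_bigr => m _; rewrite qq'.
Qed.

Lemma nc_mulA p q r : nc_eq (nc_mul (nc_mul p q) r) (nc_mul p (nc_mul q r)).
Proof.
move=> w; rewrite !ncoef_mul big_nc_mul; apply: eq_bigr => m _.
rewrite big_nc_mul; apply: eq_bigr => m' _.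
by apply: eq_bigr => m'' _; rewrite catA mulrA.
Qed.

Lemma nc_mul1 q : nc_eq (nc_mul nc_one q) q.
Proof. by move=> w; rewrite ncoef_mul_prefix big_seq1 /= take0 drop0 mul1r. Qed.

Lemma nc_mul0 p : nc_mul p [::] = [::].
Proof. by elim: p. Qed.

Lemma nc_mul_catl p1 p2 q : nc_mul (p1 ++ p2) q = nc_mul p1 q ++ nc_mul p2 q.
Proof. by rewrite /nc_mul map_cat flatten_cat. Qed.

Lemma nc_word_mul u p : nc_mul (nc_word u) p = [seq (m.1, u ++ m.2) | m <- p].
Proof. by rewrite /nc_mul /= cats0; apply: eq_map => m; rewrite mul1r. Qed.

Lemma ncoef_mulZl c p q w :
  ncoef (nc_mul (nc_scale c p) q) w = c * ncoef (nc_mul p q) w.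
Proof.
rewrite !ncoef_mul_prefix big_map mulr_sumr; apply: eq_bigr => m _ /=.
by case: ifP; rewrite ?mulr0 // mulrA.
Qed.

Lemma ncoef_mulZr p c q w :
  ncoef (nc_mul p (nc_scale c q)) w = c * ncoef (nc_mul p q) w.
Proof.
rewrite !ncoef_mul_prefix mulr_sumr; apply: eq_bigr => m _.
by case: ifP; rewrite ?mulr0 // ncoef_scale mulrCA.
Qed.

Lemma ncoef_mul_sumr p qs w :
  ncoef (nc_mul p (nc_sum qs)) w = \sum_(q <- qs) ncoef (nc_mul p q) w.
Proof.
under [RHS]eq_bigr do rewrite ncoef_mul_prefix.
rewrite ncoef_mul_prefix exchange_big; apply: eq_bigr => m _.
case: ifP => _; last by rewrite big1.
by rewrite ncoef_sum mulr_sumr.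
Qed.

Lemma sigma_word_cat u v :
  nc_eq (sigma_word (u ++ v)) (nc_mul (sigma_word u) (sigma_word v)).
Proof.
elim: u => [|b u IHu] w /=; first by rewrite nc_mul1.
by rewrite (nc_eq_mulr _ IHu) nc_mulA.
Qed.

Lemma sigma_word_x j : nc_eq (sigma_word (nseq j lx)) (nc_word (nseq j lx)).
Proof. by elim: j => [//|j IHj] w /=; rewrite (nc_eq_mulr _ IHj) nc_word_mul. Qed.

Lemma sigma_word_z m : (0 < m)%N ->
  nc_eq (sigma_word (zw m)) (nc_scale 'X (nc_word (nseq m lx)) ++ nc_word (zw m)).
Proof.
case: m => [//|m] _ w; rewrite /zw /= -cats1 sigma_word_cat.
rewrite (nc_eq_mull _ (sigma_word_x m)) nc_word_mul /= !mulr1.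
by rewrite -[[:: lx]]/(nseq 1 lx) -nseqD addn1.
Qed.

Lemma ncoef_S_t p w : ncoef (S_t p) w = \sum_(m <- p) m.1 * ncoef (S_word m.2) w.
Proof. by rewrite ncoef_sum big_map; apply: eq_bigr => m _; rewrite ncoef_scale. Qed.

Lemma S_t_cat p q : S_t (p ++ q) = S_t p ++ S_t q.
Proof. by rewrite /S_t map_cat /nc_sum flatten_cat. Qed.

Lemma S_word_rcons u b : S_word (rcons u b) = nc_mul (sigma_word u) (nc_word [:: b]).
Proof. by rewrite /S_word rev_rcons revK. Qed.

Lemma S_word_cat u v : v != [::] ->
  nc_eq (S_word (u ++ v)) (nc_mul (sigma_word u) (S_word v)).
Proof.
case/lastP: v => [//|v b] _ w.
by rewrite -rcons_cat !S_word_rcons (nc_eq_mull _ (sigma_word_cat u v)) nc_mulA.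
Qed.

Lemma S_t_word_mul u p : all (fun m => m.2 != [::]) p ->
  nc_eq (S_t (nc_mul (nc_word u) p)) (nc_mul (sigma_word u) (S_t p)).
Proof.
move=> /allP p_nonconst w.
rewrite ncoef_S_t nc_word_mul big_map ncoef_mul_sumr big_map.
by apply: eq_big_seq => m pm /=; rewrite ncoef_mulZr S_word_cat ?p_nonconst.
Qed.

Lemma S_word_z m : nc_eq (S_word (zw m)) (nc_word (zw m)).
Proof.
move=> w; rewrite /zw S_word_rcons (nc_eq_mull _ (sigma_word_x _)).
by rewrite nc_word_mul /= cats1.
Qed.

Definition zword (a : nat) (c : seq nat) : seq bool :=
  flatten [seq zw (a * ki) | ki <- c].

Lemma NknE a k n : Nkn a k n = [seq (1, zword a c) | c <- comps k n].
Proof. by []. Qed.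

Lemma comps_nil k n : (k < n)%N -> comps k n = [::].
Proof.
elim: n k => [//|n IHn] k lt_kn /=.
have /eq_in_map-> : {in iota 1 k, forall i,
    [seq i :: c | c <- comps (k - i) n] = [::]}.
  by move=> i; rewrite mem_iota => /andP[i_gt0 i_le_k]; rewrite IHn //; lia.
by elim: (iota 1 k).
Qed.

Lemma size_comps k n c : c \in comps k n -> size c = n.
Proof.
elim: n k c => [|n IHn] k c /=.
  by case: (k == 0%N); rewrite ?inE // => /eqP->.
by case/flattenP => _ /mapP[i _ ->] /mapP[c' /IHn c'n ->] /=; rewrite c'n.
Qed.

Lemma Nkn_nil a k n : (k < n)%N -> Nkn a k n = [::].
Proof. by move=> lt_kn; rewrite NknE comps_nil. Qed.

Lemma Nkn_nonconst a k n : all (fun m => m.2 != [::]) (Nkn a k n.+1).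
Proof.
apply/allP => _ /mapP[[|ki c] /size_comps // _ ->].
by rewrite /zword /= -size_eq0 size_cat size_rcons.
Qed.

Lemma zwD m l : (0 < l)%N -> zw (m + l) = nseq m lx ++ zw l.
Proof. by case: l => // l _; rewrite /zw addnS -rcons_cat -nseqD. Qed.

Lemma Nkn_rec a k n : (0 < a)%N ->
  Nkn a k.+1 n.+1 = nc_mul (nc_word (zw a)) (Nkn a k n)
                    ++ nc_mul (nc_word (nseq a lx)) (Nkn a k n.+1).
Proof.
move=> a_gt0; rewrite !nc_word_mul !NknE -!map_comp [comps k.+1 _]/=.
rewrite map_cat subSS subn0 -map_comp; congr (_ ++ _).
  by apply: eq_map => c; rewrite /zword /= muln1.
rewrite -[2%N]/(1 + 1)%N iotaDl map_flatten -!map_comp [comps k n.+1]/=.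
rewrite map_flatten -map_comp.
congr flatten; apply/eq_in_map => i; rewrite mem_iota => /andP[i_gt0 _] /=.
rewrite -!map_comp add1n subSS; apply: eq_map => c /=.
by rewrite /zword /= mulnS zwD ?muln_gt0 ?a_gt0 // catA.
Qed.

Lemma S_t_Nkn1 a k : nc_eq (S_t (Nkn a k 1)) (Nkn a k 1).
Proof.
move=> w; rewrite ncoef_S_t ncoefE; apply: eq_big_seq => _ /mapP[c c_k ->] /=.
move: (size_comps c_k); case: c c_k => [|ki [|]] //= _ _.
by rewrite /zword /= cats0 S_word_z ncoef_word mul1r; case: eqP.
Qed.

Section BinomialSums.

Variables (R : comPzRingType) (t : R).

Definition binsum (k n : nat) (f : nat -> R) : R :=
  \sum_(1 <= i < n.+1) 'C(k - i, n - i)%:R * t ^+ (n - i) * f i.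

Lemma eq_binsum k n f g :
  {in [pred i | 0 < i <= n]%N, f =1 g} -> binsum k n f = binsum k n g.
Proof. by move=> fg; apply: eq_big_nat => i /fg->. Qed.

Lemma binsumD k n f g :
  binsum k n (f \+ g) = binsum k n f + binsum k n g.
Proof. by rewrite -big_split; apply: eq_bigr => i _; rewrite /= mulrDr. Qed.

Lemma binsum1 k f : binsum k 1 f = f 1%N.
Proof. by rewrite /binsum big_nat1 subnn bin0 expr0 !mul1r. Qed.

Lemma binsum_shift k n f : 'C(k, n)%:R * f 0%N = 0 ->
  binsum k.+1 n.+1 (fun i => f i.-1) = binsum k n f.
Proof.
move=> Cf0; rewrite /binsum big_nat_recl //= !subSS !subn0 mulrAC Cf0 mul0r add0r.
by apply: eq_bigr => i _; rewrite !subSS.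
Qed.

Lemma binsum_pascal k n f :
  (forall i, (k < i)%N -> f i = 0) ->
  binsum k.+1 n.+1 f = t * binsum k n f + binsum k n.+1 f.
Proof.
move=> f_eq0; rewrite /binsum !(big_nat_recr n.+1) //= !subnn !bin0 addrA.
congr (_ + _).
rewrite mulr_sumr -big_split; apply: eq_big_nat => i /andP[_ le_i_n] /=.
have [le_i_k|lt_k_i] := leqP i k; last by rewrite f_eq0 // !mulr0 addr0.
rewrite subSn // [(n.+1 - i)%N]subSn // binS natrD exprS; ring.
Qed.

End BinomialSums.

Definition nc_binsum (k n : nat) (P : nat -> ncpoly) : ncpoly :=
  nc_sum [seq nc_scale ('C(k - i, n - i)%:R * 'X^(n - i)) (P i) | i <- iota 1 n].

Lemma ncoef_nc_binsum k n P w :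
  ncoef (nc_binsum k n P) w = binsum 'X k n (fun i => ncoef (P i) w).
Proof.
rewrite ncoef_sum big_map /binsum /index_iota subn1.
by apply: eq_bigr => i _; rewrite ncoef_scale.
Qed.

Lemma ncoef_mul_nc_binsum p k n P w :
  ncoef (nc_mul p (nc_binsum k n P)) w =
  binsum 'X k n (fun i => ncoef (nc_mul p (P i)) w).
Proof.
rewrite ncoef_mul_sumr big_map /binsum /index_iota subn1.
by apply: eq_bigr => i _; rewrite ncoef_mulZr.
Qed.

Lemma S_t_Nkn a k n : (0 < a)%N -> (0 < n)%N ->
  nc_eq (S_t (Nkn a k n)) (nc_binsum k n (Nkn a k)).
Proof.
move=> a_gt0; elim: k n => [|k IHk] n n_gt0 w.
  rewrite Nkn_nil // ncoef_nil ncoef_nc_binsum /binsum big1_seq // => i.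
  rewrite mem_index_iota => /andP[_ /andP[i_gt0 _]].
  by rewrite Nkn_nil // ncoef_nil mulr0.
case: n n_gt0 => [//|[_|n _]]; first by rewrite S_t_Nkn1 ncoef_nc_binsum binsum1.
pose xaN i := ncoef (nc_mul (nc_word (nseq a lx)) (Nkn a k i)) w.
pose zaN i := ncoef (nc_mul (nc_word (zw a)) (Nkn a k i)) w.
have S_t_rec : ncoef (S_t (Nkn a k.+1 n.+2)) w =
    'X * binsum 'X k n.+1 xaN + binsum 'X k n.+1 zaN + binsum 'X k n.+2 xaN.
  rewrite Nkn_rec // S_t_cat ncoef_cat !S_t_word_mul ?Nkn_nonconst //.
  rewrite (nc_eq_mull _ (sigma_word_z a_gt0)) (nc_eq_mull _ (sigma_word_x a)).
  rewrite nc_mul_catl ncoef_cat ncoef_mulZl !(nc_eq_mulr _ (IHk _ _)) //.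
  by rewrite !ncoef_mul_nc_binsum.
have binsum_rec : ncoef (nc_binsum k.+1 n.+2 (Nkn a k.+1)) w =
    binsum 'X k.+1 n.+2 (fun i => zaN i.-1) + binsum 'X k.+1 n.+2 xaN.
  rewrite ncoef_nc_binsum -binsumD; apply: eq_binsum => -[//|i] _.
  by rewrite Nkn_rec // ncoef_cat.
rewrite S_t_rec binsum_rec binsum_shift ?binsum_pascal; first by ring.
  by move=> i lt_k_i; rewrite /xaN Nkn_nil // nc_mul0 ncoef_nil.
(* N_{k,0} vanishes unless k = 0, and C(0, n+1) = 0. *)
rewrite /zaN NknE /=; case: eqP => [->|_]; first by rewrite mul0r.
by rewrite nc_mul0 ncoef_nil mulr0.
Qed.

Unset Implicit Arguments.

Theorem proposition4p10 (a k n : nat) :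
  (0 < a)%N -> (0 < n)%N -> (n <= k)%N ->
  nc_eq (S_t (Nkn a k n))
        (nc_sum [seq nc_scale (('C(k - i, k - n))%:R * 'X^(n - i)) (Nkn a k i)
                | i <- iota 1 n]).
Proof.
move=> a_gt0 n_gt0 le_n_k w; rewrite S_t_Nkn //.
congr (ncoef (nc_sum _) w); apply/eq_in_map => i; rewrite mem_iota => /andP[_ le_i_n].
have -> : (k - n = (k - i) - (n - i))%N by lia.
by rewrite bin_sub //; lia.
Qed.
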